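(* Let $\Pi$ and $\mathcal{R}=\{R_1,\dots,R_k\}$ be finite sets of unary and binary relation symbols, and let $A$ be a $(\Pi,\mathcal{R})$-automaton. Let $\Phi$ be the set of all formulae $\tau$ such that, for some $n\in\mathbb{N}$ and some pointed $(\Pi,\mathcal{R})$-model $(M,w)$ which $A$ accepts in round $n$, $\tau=\tau_{(M,w),n}$; let $\Psi$ be defined analogously with ''rejects'' in place of ''accepts''. Then for every pointed $(\Pi,\mathcal{R})$-model $(M,w)$: $A$ accepts $(M,w)$ iff $(M,w)\models\bigvee\Phi$ (i.e. $(M,w)$ satisfies some member of $\Phi$), and $A$ rejects $(M,w)$ iff $(M,w)\models\bigvee\Psi$. Moreover, for every $n\in\mathbb{N}$ and every pointed model $(M,w)$, $\tau_{(M,w),n}\in\Phi$ iff $A$ accepts $(M,w)$ in round $n$, and $\tau_{(M,w),n}\in\Psi$ iff $A$ rejects $(M,w)$ in round $n$.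
   Context: A $(\Pi,\mathcal{R})$-model $M$ consists of a nonempty domain $W$ with $P^M\subseteq W$ for $P\in\Pi$ and $R_i^M\subseteq W\times W$; a pointed model is $(M,w)$ with $w\in W$. Modal logic $\mathrm{ML}(\Pi,\mathcal{R})$ has formulae built from $\top$, $P\in\Pi$, $\neg$, $\wedge$, and $\langle R_i\rangle\varphi$, with $(M,w)\models\langle R_i\rangle\varphi$ iff there is $v$ with $(w,v)\in R_i^M$ and $(M,v)\models\varphi$ (other clauses standard). Types: $T_0$ consists of one formula $\bigwedge_{P\in U}P\wedge\bigwedge_{P\in\Pi\setminus U}\neg P$ for each $U\subseteq\Pi$ (with a fixed canonical ordering/bracketing), and $\tau_{(M,w),0}$ is the unique member of $T_0$ true at $(M,w)$. Recursively, $\tau_{(M,w),n+1}:=\tau_{(M,w),n}\wedge\bigwedge\{\langle R_i\rangle\tau:\tau\in T_n,\ (M,w)\models\langle R_i\rangle\tau,\ 1\le i\le k\}\wedge\bigwedge\{\neg\langle R_i\rangle\tau:\tau\in T_n,\ (M,w)\not\models\langle R_i\rangle\tau,\ 1\le i\le k\}$ (canonical ordering, so equivalent types are the same formula), and $T_{n+1}$ is the (finite) set of all $\tau_{(M,w),n+1}$. $\tau_{(M,w),n}$ is called the $(\Pi,\mathcal{R},n)$-type of $(M,w)$; each pointed model satisfies exactly one member of $T_n$. A $(\Pi,\mathcal{R})$-automaton is a tuple $A=(Q,\mathcal{M},\pi,\delta,\mu,F,G)$ with $Q,\mathcal{M}$ nonempty finite or countably infinite, $\pi:\mathrm{Pow}(\Pi)\to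 Q$, $\delta:(\mathrm{Pow}(\mathcal{M}))^k\times Q\to Q$, $\mu:Q\times\mathcal{R}\to\mathcal{M}$, $F\subseteq Q$, $G\subseteq Q\setminus F$. On a model $M$ with domain $W$: $f_0(w)=\pi(\{P\in\Pi:w\in P^M\})$, $f_{n+1}(w)=\delta((N_1,\dots,N_k),f_n(w))$ with $N_i=\{\mu(f_n(v),R_i):(w,v)\in R_i^M\}$. $A$ accepts $(M,w)$ in round $n$ if $f_n(w)\in F$ and $f_m(w)\notin G$ for all $m<n$; it rejects $(M,w)$ in round $n$ if $f_n(w)\in G$ and $f_m(w)\notin F$ for all $m<n$; it accepts (rejects) $(M,w)$ if it does so in some round. *)

From Stdlib Require Import ClassicalEpsilon.
From HB Require Import structures.
From mathcomp Require Import all_boot.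

Set Implicit Arguments.
Unset Strict Implicit.
Unset Printing Implicit Defensive.

Definition pbool (Pr : Prop) : bool :=
  if excluded_middle_informative Pr then true else false.

(* Unary symbols Pi : a finite type P; binary symbols R_1..R_k : 'I_k. *)

Inductive form (P : finType) (k : nat) : Type :=
| FTop
| FAtom of P
| FNeg of form P k
| FAnd of form P k & form P k
| FDia of 'I_k & form P k.
Arguments FTop {P k}.
Arguments FAtom {P k}.
Arguments FNeg {P k}.
Arguments FAnd {P k}.
Arguments FDia {P k}.

Record model (P : finType) (k : nat) := Model {
  dom : Type;
  dom_inh : inhabited dom;
  mval : P -> dom -> Prop;
  mrel : 'I_k -> dom -> dom -> Prop }.
Arguments mval {P k} M p w : rename.
Arguments mrel {P k} M i w v : rename.
Arguments dom_inh {P k} M : rename.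

Fixpoint sat (P : finType) (k : nat) (M : model P k) (phi : form P k)
  (w : dom M) {struct phi} : Prop :=
  match phi with
  | FTop => True
  | FAtom p => mval M p w
  | FNeg psi => ~ @sat P k M psi w
  | FAnd a b => @sat P k M a w /\ @sat P k M b w
  | FDia i psi => exists v, mrel M i w v /\ @sat P k M psi v
  end.
Arguments sat {P k} M phi w.

Fixpoint bigAnd (P : finType) (k : nat) (l : seq (form P k)) : form P k :=
  match l with
  | [::] => FTop
  | [:: a] => a
  | a :: l' => FAnd a (@bigAnd P k l')
  end.

Definition ptype (P : finType) (k : nat) (U : {set P}) : form P k :=
  bigAnd ([seq FAtom p | p <- enum P & p \in U] ++
          [seq FNeg (FAtom p) | p <- enum P & p \notin U]).

Definition T0 (P : finType) (k : nat) : seq (form P k) :=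
  [seq ptype k U | U <- enum {set P}].

Definition tau0 (P : finType) (k : nat) (M : model P k) (w : dom M) : form P k :=
  ptype k [set p | pbool (mval M p w)].
Arguments tau0 {P k} M w.

(* tau /\ (conj of <R_i>t for selected t) /\ (conj of ~<R_i>t for the others);
   ms is a list of k bit masks over Ts *)
Definition build (P : finType) (k : nat) (Ts : seq (form P k)) (t : form P k)
  (ms : seq bitseq) : form P k :=
  FAnd t (FAnd
    (bigAnd (flatten [seq [seq FDia i s | s <- mask (nth [::] ms i) Ts]
                     | i <- enum 'I_k]))
    (bigAnd (flatten [seq [seq FNeg (FDia i s)
                            | s <- mask (map negb (nth [::] ms i)) Ts]
                     | i <- enum 'I_k]))).

Fixpoint allmasks (m : nat) : seq bitseq :=
  match m with
  | 0 => [:: [::]]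
  | m'.+1 => flatten [seq [:: false :: s; true :: s] | s <- allmasks m']
  end.

Fixpoint allmlists (j m : nat) : seq (seq bitseq) :=
  match j with
  | 0 => [:: [::]]
  | j'.+1 => [seq s :: l | s <- allmasks m, l <- allmlists j' m]
  end.

(* finite list of syntactic candidates for level n+1 given T_n *)
Definition candidates (P : finType) (k : nat) (Ts : seq (form P k)) :
  seq (form P k) :=
  [seq build Ts t ms | t <- Ts, ms <- allmlists k (size Ts)].

(* tau_{(M,w),n+1} from T_n and tau_{(M,w),n} *)
Definition step (P : finType) (k : nat) (Ts : seq (form P k)) (t : form P k)
  (M : model P k) (w : dom M) : form P k :=
  build Ts t [seq [seq pbool (sat M (FDia i s) w) | s <- Ts] | i <- enum 'I_k].
Arguments step {P k} Ts t M w.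

(* level n: (T_n as a canonically ordered list, the map (M,w) |-> tau_{(M,w),n}) *)
Fixpoint lvl (P : finType) (k : nat) (n : nat) :
  seq (form P k) * (forall M : model P k, dom M -> form P k) :=
  match n with
  | 0 => (T0 P k, @tau0 P k)
  | n'.+1 =>
      let p := lvl P k n' in
      ([seq phi <- candidates p.1 |
         pbool (exists (M : model P k) (w : dom M),
                  step p.1 (p.2 M w) M w = phi)],
       fun M w => step p.1 (p.2 M w) M w)
  end.

Definition Tn (P : finType) (k : nat) (n : nat) : seq (form P k) := (lvl P k n).1.
Definition tau (P : finType) (k : nat) (n : nat) (M : model P k) (w : dom M) :
  form P k := (lvl P k n).2 M w.
Arguments tau {P k} n M w.

(* (Pi,R)-automata; Q and the message set are countable (finite or
   countably infinite) and nonempty (nonemptiness follows from pi, mu) *)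
Record automaton (P : finType) (k : nat) := Automaton {
  st : countType;
  msg : countType;
  a_pi : {set P} -> st;
  a_delta : ('I_k -> (msg -> Prop)) -> st -> st;
  a_mu : st -> 'I_k -> msg;
  a_F : st -> Prop;
  a_G : st -> Prop;
  a_GF : forall q, a_G q -> ~ a_F q }.
Arguments st {P k} A : rename.
Arguments msg {P k} A : rename.
Arguments a_pi {P k} A U : rename.
Arguments a_delta {P k} A N q : rename.
Arguments a_mu {P k} A q i : rename.
Arguments a_F {P k} A q : rename.
Arguments a_G {P k} A q : rename.

Fixpoint run (P : finType) (k : nat) (A : automaton P k) (M : model P k)
  (n : nat) : dom M -> st A :=
  match n with
  | 0 => fun w => a_pi A [set p | pbool (mval M p w)]
  | n'.+1 => fun w =>
      a_delta A (fun i m => exists v, mrel M i w v /\ a_mu A (@run P k A M n' v) i = m)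
                (@run P k A M n' w)
  end.

Arguments run {P k} A M n w.
Definition accepts_in (P : finType) (k : nat) (A : automaton P k) (M : model P k)
  (w : dom M) (n : nat) : Prop :=
  a_F A (run A M n w) /\ forall m, m < n -> ~ a_G A (run A M m w).
Arguments accepts_in {P k} A M w n.

Definition rejects_in (P : finType) (k : nat) (A : automaton P k) (M : model P k)
  (w : dom M) (n : nat) : Prop :=
  a_G A (run A M n w) /\ forall m, m < n -> ~ a_F A (run A M m w).
Arguments rejects_in {P k} A M w n.

Definition accepts (P : finType) (k : nat) (A : automaton P k) (M : model P k)
  (w : dom M) : Prop := exists n, accepts_in A M w n.
Arguments accepts {P k} A M w.

Definition rejects (P : finType) (k : nat) (A : automaton P k) (M : model P k)
  (w : dom M) : Prop := exists n, rejects_in A M w n.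
Arguments rejects {P k} A M w.

Definition PhiSet (P : finType) (k : nat) (A : automaton P k) (phi : form P k) : Prop :=
  exists n (M : model P k) (w : dom M), accepts_in A M w n /\ phi = tau n M w.
Arguments PhiSet {P k} A phi.

Definition PsiSet (P : finType) (k : nat) (A : automaton P k) (phi : form P k) : Prop :=
  exists n (M : model P k) (w : dom M), rejects_in A M w n /\ phi = tau n M w.
Arguments PsiSet {P k} A phi.

From mathcomp Require Import all_boot.
From Stdlib Require Import ClassicalEpsilon FunctionalExtensionality PropExtensionality.
From HB Require Import structures.

Set Implicit Arguments.
Unset Strict Implicit.
Unset Printing Implicit Defensive.

(* Two pointed models with the same n-type satisfy the same diamonds over (n-1)-types,
   so each successor of one is matched by a successor of the other with the same
   (n-1)-type; by induction on n the automaton is then in the same state after rounds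
   0..n at both points.  Hence acceptance (rejection) in round n is a property of the
   n-type, and since every pointed model satisfies exactly one n-type, which is its
   own, the disjunction of the accepting types defines acceptance.  The round n can
   be read off the formula tau_n, so a type lies in Phi exactly at its own level. *)

Lemma pboolP (Pr : Prop) : reflect Pr (pbool Pr).
Proof. by rewrite /pbool; case: excluded_middle_informative => h; constructor. Qed.

Lemma form_eqP (P : finType) (k : nat) :
  Equality.axiom (fun x y : form P k => pbool (x = y)).
Proof. by move=> x y; apply: pboolP. Qed.

HB.instance Definition _ (P : finType) (k : nat) :=
  hasDecEq.Build (form P k) (@form_eqP P k).

Lemma nth_map_enum_ord (T : Type) (k : nat) (g : 'I_k -> T) (x0 : T) (i : 'I_k) :
  nth x0 [seq g j | j <- enum 'I_k] i = g i.
Proof. by rewrite (nth_map i) ?size_enum_ord // nth_ord_enum. Qed.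

Section Types.
Variables (P : finType) (k : nat).
Implicit Types (M : model P k) (Ts : seq (form P k)).

Lemma sat_bigAnd M (l : seq (form P k)) w :
  sat M (bigAnd l) w <-> forall x, x \in l -> sat M x w.
Proof.
elim: l => [|a [|b l] IH] /=; first by split=> // _ x.
  by split=> [h x /[!inE] /eqP -> // | ]; apply; rewrite inE.
split=> [[ha /IH hl] x /[!inE] /orP [/eqP -> //|]|h]; first exact: hl.
by split; [apply: h; rewrite mem_head | apply/IH => x hx; apply: h; rewrite inE hx orbT].
Qed.

Lemma sat_build M Ts t ms w :
  sat M (build Ts t ms) w <-> [/\ sat M t w,
    forall (i : 'I_k) s, s \in mask (nth [::] ms i) Ts -> sat M (FDia i s) w &
    forall (i : 'I_k) s, s \in mask (map negb (nth [::] ms i)) Ts ->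
      ~ sat M (FDia i s) w].
Proof.
split=> [[ht [/sat_bigAnd hdia /sat_bigAnd hndia]]|[ht hdia hndia]].
  split=> // i s hs; [apply: (hdia (FDia i s)) | apply: (hndia (FNeg (FDia i s)))];
    by apply/flatten_mapP; exists i; rewrite ?mem_enum ?map_f.
by split=> //; split; apply/sat_bigAnd => x /flatten_mapP [i _ /mapP [s hs ->]];
  [apply: hdia | apply: hndia].
Qed.

Lemma sat_step M M' Ts t w w' :
  sat M (step Ts t M' w') w <->
  sat M t w /\ forall (i : 'I_k) s, s \in Ts ->
    (sat M (FDia i s) w <-> sat M' (FDia i s) w').
Proof.
rewrite /step sat_build.
set ms := [seq _ | i <- enum 'I_k].
have mask_ms b (i : 'I_k) : mask (map b (nth [::] ms i)) Ts
    = filter (b \o fun s => pbool (sat M' (FDia i s) w')) Ts.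
  by rewrite nth_map_enum_ord -map_comp filter_mask.
have mask_ms1 (i : 'I_k) :
    mask (nth [::] ms i) Ts = filter (fun s => pbool (sat M' (FDia i s) w')) Ts.
  by rewrite nth_map_enum_ord filter_mask.
split=> [[ht hdia hndia]|[ht hiff]].
  split=> // i s hs; split=> [hM|hM'].
    apply/pboolP; apply/negPn/negP => hn.
    by apply: (hndia i s) hM; rewrite mask_ms mem_filter /= hn.
  by apply: (hdia i s); rewrite mask_ms1 mem_filter hs andbT; apply/pboolP.
split=> // i s; [rewrite mask_ms1 | rewrite mask_ms]; rewrite mem_filter.
  by case/andP => /pboolP hM' hs; apply/(hiff i s hs).
by case/andP => /= /negP hn hs /(hiff i s hs) /pboolP.
Qed.

Lemma tauS n M w : tau n.+1 M w = step (Tn P k n) (tau n M w) M w.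
Proof. by []. Qed.

Lemma sat_ptype M U w : sat M (ptype k U) w <-> U = [set p | pbool (mval M p w)].
Proof.
rewrite /ptype sat_bigAnd; split=> [h|->].
  apply/setP => p; rewrite inE; apply/idP/pboolP => [pU | hp].
    by apply: (h (FAtom p)); rewrite mem_cat map_f // mem_filter pU mem_enum.
  apply/negPn/negP => pU; apply: (h (FNeg (FAtom p))) hp.
  by rewrite mem_cat orbC map_f // mem_filter pU mem_enum.
move=> x /[!mem_cat] /orP [] /mapP [p /[!(mem_filter, inE)] /andP [hp _] ->] /=.
  exact/pboolP.
by move=> /pboolP; apply/negP.
Qed.

Lemma sat_tau n M w : sat M (tau n M w) w.
Proof.
elim: n w => [|n IH] w; first exact/sat_ptype.
by rewrite tauS; apply/sat_step.
Qed.

Lemma tau_eq_of_sat n M M' w w' : sat M (tau n M' w') w -> tau n M w = tau n M' w'.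
Proof.
elim: n w w' => [|n IH] w w'.
  by move=> /sat_ptype hU; rewrite /tau /= /tau0 -hU.
rewrite !tauS => /sat_step [ht hiff].
rewrite /step (IH _ _ ht); congr build; apply: eq_map => i.
by apply/eq_in_map => s hs; apply/idP/idP => /pboolP/hiff-/(_ hs)/pboolP.
Qed.

Lemma allmasks_size m (b : bitseq) : size b = m -> b \in allmasks m.
Proof.
elim: m b => [|m IH] [|x b] //= [hb]; apply/flatten_mapP; exists b; first exact: IH.
by case: x; rewrite !inE eqxx ?orbT.
Qed.

Lemma allmlists_size j m (l : seq bitseq) :
  size l = j -> all (fun b => size b == m) l -> l \in allmlists j m.
Proof.
elim: j l => [|j IH] [|b l] //= [hl] /andP [/eqP hb ha].
by apply: allpairs_f; [apply: allmasks_size | apply: IH].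
Qed.

Lemma tau_in_Tn n M w : tau n M w \in Tn P k n.
Proof.
elim: n w => [|n IH] w; first by rewrite /tau /Tn /= /T0 map_f ?mem_enum.
rewrite /Tn /= mem_filter; apply/andP; split; first by apply/pboolP; exists M, w.
apply: allpairs_f; first exact: IH.
apply: allmlists_size; first by rewrite size_map size_enum_ord.
by apply/allP => b /mapP [i _ ->]; rewrite size_map.
Qed.

Lemma tau_leq m n M M' w w' :
  m <= n -> tau n M w = tau n M' w' -> tau m M w = tau m M' w'.
Proof.
elim: n => [|n IH]; first by rewrite leqn0 => /eqP ->.
by rewrite leq_eqVlt => /orP [/eqP -> //|/IH hm]; rewrite !tauS => -[] /hm.
Qed.

(* tau_{n+1}(M,w) has the conjunct <R_i> tau_n(M,v), which (M',w') must then satisfy. *)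
Lemma tauS_forth n M M' w w' i v :
  tau n.+1 M w = tau n.+1 M' w' -> mrel M i w v ->
  exists2 v', mrel M' i w' v' & tau n M v = tau n M' v'.
Proof.
move=> htau hwv; have := sat_tau n.+1 w'; rewrite -htau tauS.
case/sat_step => _ /(_ i (tau n M v) (tau_in_Tn n v)) hiff.
have [v' [hwv' hv']] : sat M' (FDia i (tau n M v)) w'.
  by apply/hiff; exists v; split; last exact: sat_tau.
by exists v'; rewrite // (tau_eq_of_sat hv').
Qed.

Lemma run_eq_of_tau (A : automaton P k) n M M' w w' :
  tau n M w = tau n M' w' -> run A M n w = run A M' n w'.
Proof.
elim: n M M' w w' => [|n IH] M M' w w' htau /=.
  by have /sat_ptype <- : sat M (tau 0 M' w') w by rewrite -htau; apply: sat_tau.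
rewrite (IH _ _ _ _ (tau_leq (leqnSn n) htau)); congr a_delta.
apply: functional_extensionality => i; apply: functional_extensionality => m.
apply: propositional_extensionality.
by split=> -[v [hwv <-]]; [have [v' ? hv] := tauS_forth htau hwv
                          | have [v' ? hv] := tauS_forth (esym htau) hwv];
  exists v'; rewrite (IH _ _ _ _ hv).
Qed.

Lemma accepts_in_tau (A : automaton P k) n M M' w w' :
  tau n M w = tau n M' w' -> accepts_in A M w n -> accepts_in A M' w' n.
Proof.
move=> htau [hF hG]; split=> [|m hm]; first by rewrite -(run_eq_of_tau A htau).
by rewrite -(run_eq_of_tau A (tau_leq (ltnW hm) htau)); apply: hG.
Qed.

Lemma rejects_in_tau (A : automaton P k) n M M' w w' :
  tau n M w = tau n M' w' -> rejects_in A M w n -> rejects_in A M' w' n.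
Proof.
move=> htau [hG hF]; split=> [|m hm]; first by rewrite -(run_eq_of_tau A htau).
by rewrite -(run_eq_of_tau A (tau_leq (ltnW hm) htau)); apply: hF.
Qed.

Fixpoint and_depth (phi : form P k) : nat :=
  if phi is FAnd a _ then (and_depth a).+1 else 0.

Lemma and_depth_bigAnd (l : seq (form P k)) :
  {in l, forall x, and_depth x = 0} -> and_depth (bigAnd l) = (1 < size l).
Proof. by case: l => [|a [|b l]] //= h; rewrite h ?mem_head. Qed.

Lemma and_depth_tau n M w : and_depth (tau n M w) = n + (1 < #|P|).
Proof.
elim: n => [|n IH]; last by rewrite tauS /= IH.
rewrite /tau /= /tau0 /ptype and_depth_bigAnd; last first.
  by move=> x /[!mem_cat] /orP [] /mapP [p _ ->].
by rewrite size_cat !size_map !size_filter cardE count_predC.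
Qed.

Lemma tau_level n n' M M' w w' : tau n M w = tau n' M' w' -> n = n'.
Proof. by move/(congr1 and_depth); rewrite !and_depth_tau => /addIn. Qed.

Definition types_of (Q : forall M, dom M -> nat -> Prop) (phi : form P k) : Prop :=
  exists n M (w : dom M), Q M w n /\ phi = tau n M w.

Variable Q : forall M, dom M -> nat -> Prop.
Hypothesis Q_tau : forall n M M' w w', tau n M w = tau n M' w' -> Q w n -> Q w' n.

Lemma types_of_sat M w : (exists n, Q w n) <-> exists phi, types_of Q phi /\ sat M phi w.
Proof.
split=> [[n hQ]|[_ [[n [M' [w' [hQ ->]]]] hsat]]].
  by exists (tau n M w); split; [exists n, M, w | exact: sat_tau].
by exists n; apply: Q_tau (esym (tau_eq_of_sat hsat)) hQ.
Qed.

Lemma types_of_tau n M w : types_of Q (tau n M w) <-> Q w n.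
Proof.
split=> [[n' [M' [w' [hQ htau]]]]|hQ]; last by exists n, M, w.
have en := tau_level htau; subst n'; exact: Q_tau (esym htau) hQ.
Qed.

End Types.

Theorem lemma4p1 (P : finType) (k : nat) (A : automaton P k) :
  (forall (M : model P k) (w : dom M),
      accepts A M w <-> exists phi, PhiSet A phi /\ sat M phi w) /\
  (forall (M : model P k) (w : dom M),
      rejects A M w <-> exists phi, PsiSet A phi /\ sat M phi w) /\
  (forall (n : nat) (M : model P k) (w : dom M),
      PhiSet A (tau n M w) <-> accepts_in A M w n) /\
  (forall (n : nat) (M : model P k) (w : dom M),
      PsiSet A (tau n M w) <-> rejects_in A M w n).
Proof.
have acc_tau := @accepts_in_tau P k A; have rej_tau := @rejects_in_tau P k A.
split; [|split; [|split]].
- exact: types_of_sat acc_tau.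
- exact: types_of_sat rej_tau.
- exact: types_of_tau acc_tau.
- exact: types_of_tau rej_tau.
Qed.
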